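(* Let $f,g,h\in\mathbb{K}[[X]][Y]$ be irreducible quasi-ordinary polynomials and $\omega\in\mathbb{R}_+^d$. Then $\mathrm{cont}_\omega(f,g)\ge\min\{\mathrm{cont}_\omega(f,h),\mathrm{cont}_\omega(h,g)\}$.
   Context: $\mathbb{K}$ is an algebraically closed field of characteristic zero, $\mathbb{K}[[X]]=\mathbb{K}[[X_1,\dots,X_d]]$. A monic polynomial in $\mathbb{K}[[X]][Y]$ is quasi-ordinary if its discriminant is $u(X)X^q$ with $u(0)\ne0$; its roots then lie in $\mathbb{K}[[X_1^{1/m},\dots,X_d^{1/m}]]$ for some $m$, and $\mathrm{Zer}$ denotes the set of roots. For a fractional power series $\alpha=\sum_a c_aX^a$ and $\omega\in\mathbb{R}_+^d$, $\mathrm{ord}_\omega(\alpha)=\min\{\langle\omega,a\rangle:c_a\ne0\}$ ($=+\infty$ if $\alpha=0$). The weighted contact is $\mathrm{cont}_\omega(f,g)=\frac{1}{\deg f\deg g}\sum_{\alpha\in\mathrm{Zer} f,\ \beta\in\mathrm{Zer} g}\mathrm{ord}_\omega(\alpha-\beta)$, which equals $\frac{1}{\deg f\deg g}\min\{\langle\omega,a\rangle: a\in\Delta(\mathrm{Res}(f,g))\}$, where $\Delta$ denotes the Newton polytope (convex hull of $\bigcup_{c_a\ne0}(a+\mathbb{R}^d_{\ge0})$). *)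

From HB Require Import structures.
From Stdlib Require Import ClassicalEpsilon FunctionalExtensionality.
From mathcomp Require Import all_boot all_order all_algebra.
Set Implicit Arguments. Unset Strict Implicit. Unset Printing Implicit Defensive.
Import Order.TTheory GRing.Theory Num.Theory.
Local Open Scope ring_scope.

(* Univariate formal power series  R[[T]]  over a commutative ring R,   *)
(* represented by their coefficient functions.                          *)
Definition PS (R : Type) := nat -> R.

Section PSeqChoice.
Variable R : Type.

Definition ps_eqb (f g : PS R) : bool :=
  if excluded_middle_informative (f = g) then true else false.

Lemma ps_eqP : Equality.axiom ps_eqb.
Proof.
move=> f g; rewrite /ps_eqb; case: excluded_middle_informative => H.
  by apply: ReflectT. by apply: ReflectF.
Qed.

HB.instance Definition _ := hasDecEq.Build (PS R) ps_eqP.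

Definition ps_find (P : pred (PS R)) (n : nat) : option (PS R) :=
  match excluded_middle_informative (exists x, P x) with
  | left H => Some (proj1_sig (constructive_indefinite_description _ H))
  | right _ => None
  end.

Lemma ps_find_some P n x : ps_find P n = Some x -> P x.
Proof.
rewrite /ps_find; case: excluded_middle_informative => // H [<-].
exact: proj2_sig (constructive_indefinite_description _ H).
Qed.

Lemma ps_find_ex (P : pred (PS R)) : (exists x, P x) -> exists n, ps_find P n.
Proof.
move=> H; exists 0%N; rewrite /ps_find; case: excluded_middle_informative => //.
Qed.

Lemma ps_find_ext (P Q : pred (PS R)) : P =1 Q -> ps_find P =1 ps_find Q.
Proof. by move=> /functional_extensionality PQ n; rewrite PQ. Qed.

HB.instance Definition _ := hasChoice.Build (PS R) ps_find_some ps_find_ex ps_find_ext.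
End PSeqChoice.

Section PSring.
Variable R : comNzRingType.

Definition ps0 : PS R := fun _ => 0.
Definition psopp (f : PS R) : PS R := fun n => - f n.
Definition psadd (f g : PS R) : PS R := fun n => f n + g n.

Lemma psaddA : associative psadd.
Proof. by move=> f g h; apply: functional_extensionality => n; rewrite /psadd addrA. Qed.
Lemma psaddC : commutative psadd.
Proof. by move=> f g; apply: functional_extensionality => n; rewrite /psadd addrC. Qed.
Lemma psadd0 : left_id ps0 psadd.
Proof. by move=> f; apply: functional_extensionality => n; rewrite /psadd /ps0 add0r. Qed.
Lemma psaddN : left_inverse ps0 psopp psadd.
Proof. by move=> f; apply: functional_extensionality => n; rewrite /psadd /psopp /ps0 addNr. Qed.

HB.instance Definition _ := GRing.isZmodule.Build (PS R) psaddA psaddC psadd0 psaddN.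

Definition pstr (n : nat) (f : PS R) : {poly R} := \poly_(i < n.+1) f i.

Definition psmul (f g : PS R) : PS R := fun n => (pstr n f * pstr n g)`_n.
Definition ps1 : PS R := fun n => if n == 0%N then 1 else 0.

Lemma coefM_agree (P P' Q Q' : {poly R}) n :
  (forall i, (i <= n)%N -> P`_i = P'`_i) -> (forall i, (i <= n)%N -> Q`_i = Q'`_i) ->
  (P * Q)`_n = (P' * Q')`_n.
Proof.
move=> HP HQ; rewrite !coefM; apply: eq_bigr => i _.
by rewrite HP ?HQ ?leq_subr // -ltnS.
Qed.

Lemma pstrE n f i : (i <= n)%N -> (pstr n f)`_i = f i.
Proof. by move=> H; rewrite /pstr coef_poly ltnS H. Qed.

Lemma psmulE f g n k : (k <= n)%N -> psmul f g k = (pstr n f * pstr n g)`_k.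
Proof.
move=> kn; rewrite /psmul; apply: coefM_agree => i ik;
  rewrite !pstrE //; exact: leq_trans ik kn.
Qed.

Lemma psmulA : associative psmul.
Proof.
move=> f g h; apply: functional_extensionality => n.
have -> : psmul f (psmul g h) n = (pstr n f * (pstr n g * pstr n h))`_n.
  rewrite {1}/psmul; apply: coefM_agree => // i H.
  by rewrite pstrE // (psmulE _ _ H).
have -> : psmul (psmul f g) h n = ((pstr n f * pstr n g) * pstr n h)`_n.
  rewrite {1}/psmul; apply: coefM_agree => // i H.
  by rewrite pstrE // (psmulE _ _ H).
by rewrite mulrA.
Qed.

Lemma psmulC : commutative psmul.
Proof. by move=> f g; apply: functional_extensionality => n; rewrite /psmul mulrC. Qed.

Lemma psmul1 : left_id ps1 psmul.
Proof.
move=> f; apply: functional_extensionality => n.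
have -> : psmul ps1 f n = (1 * pstr n f)`_n.
  rewrite /psmul; apply: coefM_agree => // i H.
  by rewrite pstrE // coefC /ps1.
by rewrite mul1r pstrE.
Qed.

Lemma psmulDl : left_distributive psmul psadd.
Proof.
move=> f g h; apply: functional_extensionality => n.
have -> : psmul (psadd f g) h n = ((pstr n f + pstr n g) * pstr n h)`_n.
  rewrite /psmul; apply: coefM_agree => // i H.
  by rewrite coefD !pstrE.
by rewrite mulrDl coefD.
Qed.

Lemma ps1_neq0 : ps1 != ps0.
Proof.
apply/eqP => /(congr1 (fun f : PS R => f 0%N)); rewrite /ps1 /ps0 /=.
by move/eqP; rewrite oner_eq0.
Qed.

HB.instance Definition _ := GRing.Zmodule_isComNzRing.Build (PS R)
  psmulA psmulC psmul1 psmulDl ps1_neq0.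
End PSring.

(* Multivariate power series  R[[X_1,...,X_d]] := R[[X_1]]...[[X_d]]   *)
(* (iterated; the outermost series variable is X_1).                   *)
Fixpoint mps (R : comNzRingType) (d : nat) : comNzRingType :=
  match d with
  | 0 => R
  | d'.+1 => (PS (mps R d') : comNzRingType)
  end.

(* coefficient of the monomial X^a, a = (a 0, ..., a (d-1)); entries of a *)
(* beyond index d-1 are ignored.                                          *)
Fixpoint mcoef (R : comNzRingType) (d : nat) : mps R d -> (nat -> nat) -> R :=
  match d with
  | 0 => fun s _ => s
  | d'.+1 => fun s a => @mcoef R d' ((s : PS (mps R d')) (a 0%N)) (fun i => a i.+1)
  end.

Fixpoint mmono (R : comNzRingType) (d : nat) : (nat -> nat) -> mps R d :=
  match d with
  | 0 => fun _ => 1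
  | d'.+1 => fun q => ((fun n => if n == q 0%N then @mmono R d' (fun i => q i.+1) else 0)
                        : PS (mps R d'))
  end.

(* The substitution X_i |-> T_i^m, identifying R[[X]] with the subring of    *)
(* R[[T]] = R[[X^(1/m)]] (T_i = X_i^(1/m)) of series in the X_i.           *)
Fixpoint mps_ram (R : comNzRingType) (m : nat) (d : nat) : mps R d -> mps R d :=
  match d with
  | 0 => fun s => s
  | d'.+1 => fun s => ((fun n => if (m %| n)%N then
                                   @mps_ram R m d' ((s : PS (mps R d')) (n %/ m)%N)
                                 else 0) : PS (mps R d'))
  end.

Definition poly_unit (S : comNzRingType) (p : {poly S}) := exists q, p * q = 1.

Definition poly_irreducible (S : comNzRingType) (p : {poly S}) :=
  ~ poly_unit p /\ forall q r : {poly S}, p = q * r -> poly_unit q \/ poly_unit r.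

Definition discr (S : comNzRingType) (p : {poly S}) : S :=
  (-1) ^+ 'C((size p).-1, 2) * resultant p p^`().

Definition quasi_ordinary (K : comNzRingType) (d : nat) (f : {poly mps K d}) :=
  f \is monic /\
  exists (u : mps K d) (q : nat -> nat),
    discr f = u * mmono K d q /\ mcoef u (fun _ => 0%N) != 0.

(* Weighted orders and weighted contact, values in R U {+oo}            *)
(* (None stands for +oo).                                              *)
Section Contact.
Variables (K : comNzRingType) (R : realFieldType) (d : nat) (w : 'I_d -> R).

Definition wpair (a : nat -> nat) : R := \sum_(i < d) w i * (a i)%:R.

Definition is_ord_min (s : mps K d) (r : R) :=
  (exists a, mcoef s a != 0 /\ wpair a = r) /\
  (forall a, mcoef s a != 0 -> r <= wpair a).

(* ord_w of a series in R[[T]] (T = X^(1/m)), measured in the T-exponents *)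
Definition ordT (s : mps K d) : option R :=
  match excluded_middle_informative (exists r, is_ord_min s r) with
  | left H => Some (proj1_sig (constructive_indefinite_description _ H))
  | right _ => None
  end.

Definition eadd (x y : option R) : option R :=
  match x, y with Some a, Some b => Some (a + b) | _, _ => None end.
Definition escale (c : R) (x : option R) : option R :=
  match x with Some a => Some (c * a) | None => None end.
Definition emin (x y : option R) : option R :=
  match x, y with
  | Some a, Some b => Some (Num.min a b)
  | Some a, None => Some a
  | None, y => y
  end.
Definition ele (x y : option R) : bool :=
  match x, y with
  | _, None => true
  | None, Some _ => false
  | Some a, Some b => a <= b
  end.

(* cont_w(f,g) computed from the root lists rf, rg of f, g in             *)
(* R[[X^(1/m)]] = R[[T]]; ord_w(alpha) = ordT(alpha) / m.                   *)
Definition cont (m : nat) (rf rg : seq (mps K d)) : option R :=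
  escale ((m * size rf * size rg)%:R)^-1
    (foldr eadd (Some 0) [seq ordT (x - y) | x <- rf, y <- rg]).

End Contact.

(* f splits in R[[X^(1/m)]][Y] with (multi)set of roots rf *)
Definition splits_with (K : comNzRingType) (d m : nat) (f : {poly mps K d})
    (rf : seq (mps K d)) :=
  map_poly (@mps_ram K m d) f = \prod_(a <- rf) ('X - a%:P).

From Pilot Require Import Defs.
From HB Require Import structures.
From Stdlib Require Import ClassicalEpsilon FunctionalExtensionality.
From mathcomp Require Import all_boot all_order all_algebra all_field zify.
From mathcomp Require cyclic.
Set Implicit Arguments. Unset Strict Implicit. Unset Printing Implicit Defensive.
Import Order.TTheory GRing.Theory Num.Theory.
Local Open Scope ring_scope.

(* Write T = X^(1/m) and let z be a primitive m-th root of unity.  The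
   substitutions T_i |-> z^(e_i) T_i are automorphisms of K[[T]] whose common
   fixed ring is K[[X]]; they permute the roots of f, g and h and preserve ord_w.
   For irreducible f, a function on Zer f invariant under them is constant: the
   roots on which it takes a given value are the roots of a factor of f over
   K[[X]].  Hence y |-> sum_(x in Zer f) ord(x - y) is constant on Zer g and on
   Zer h, and x |-> sum_(y in Zer g) ord(x - y) is constant on Zer f and on Zer h.
   Now take (a, c) in Zer f x Zer h and (c', b) in Zer h x Zer g maximizing the
   order of the difference.  If ord(c' - b) <= ord(a - c), the ultrametric
   inequality gives ord(a - y) >= ord(c - y) for every y in Zer g, and comparing
   row sums yields cont(f,g) >= cont(h,g); otherwise ord(x - b) >= ord(x - c')
   for every x in Zer f, and column sums yield cont(f,g) >= cont(f,h). *)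

Lemma ps_ext (R : comNzRingType) (f g : PS R) : (forall n, f n = g n) -> f = g.
Proof. by move=> fg; apply: functional_extensionality. Qed.

Lemma ps1E (R : comNzRingType) n : (1 : PS R) n = if n == 0%N then 1 else 0.
Proof. by []. Qed.

Lemma psM (R : comNzRingType) (f g : PS R) n :
  (f * g : PS R) n = \sum_(i < n.+1) f i * g (n - i)%N.
Proof.
change ((pstr n f * pstr n g)`_n = \sum_(i < n.+1) f i * g (n - i)%N).
by rewrite coefM; apply: eq_bigr => i _; rewrite !pstrE // ?leq_subr // -ltnS.
Qed.

Lemma ps_neq0 (R : comNzRingType) (s : PS R) : s <> 0 -> exists n, s n != 0.
Proof.
move=> s0; apply: NNPP => s_eq0; apply: s0; apply: ps_ext => n; change (s n = 0).
by case: (eqVneq (s n) 0) => // sn; case: s_eq0; exists n.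
Qed.

Definition shift (a : nat -> nat) : nat -> nat := fun i => a i.+1.
Definition consf (h : nat) (b : nat -> nat) : nat -> nat :=
  fun i => if i is i'.+1 then b i' else h.

Lemma consf_shift a : consf (a 0%N) (shift a) = a.
Proof. by apply: functional_extensionality => -[]. Qed.

Section Coefficients.
Variable K : comNzRingType.

Lemma mcoefS d (s : mps K d.+1) a :
  mcoef s a = mcoef ((s : PS (mps K d)) (a 0%N)) (shift a).
Proof. by []. Qed.

Lemma mcoefD d (s t : mps K d) a : mcoef (s + t) a = mcoef s a + mcoef t a.
Proof. by elim: d s t a => [//|d IH] s t a; rewrite !mcoefS IH. Qed.

Lemma mcoef0 d a : mcoef (0 : mps K d) a = 0.
Proof. by elim: d a => [//|d IH] a; rewrite mcoefS IH. Qed.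

Lemma mcoefN d (s : mps K d) a : mcoef (- s) a = - mcoef s a.
Proof. by elim: d s a => [//|d IH] s a; rewrite !mcoefS IH. Qed.

Lemma mcoef_ext d (s t : mps K d) : (forall a, mcoef s a = mcoef t a) -> s = t.
Proof.
elim: d s t => [|d IH] s t st; first exact: (st (fun _ => 0%N)).
by apply: ps_ext => n; apply: IH => b; have := st (consf n b).
Qed.

Lemma eq_mcoef_exp d (s : mps K d) a b : (forall i, (i < d)%N -> a i = b i) ->
  mcoef s a = mcoef s b.
Proof.
elim: d s a b => [//|d IH] s a b ab; rewrite !mcoefS ab //.
by apply: IH => i id; apply: ab.
Qed.

Lemma mcoef_neq0 d (s : mps K d) : s <> 0 -> exists a, mcoef s a != 0.
Proof.
move=> s0; apply: NNPP => s_eq0; apply: s0; apply: mcoef_ext => a; rewrite mcoef0.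
by case: (eqVneq (mcoef s a) 0) => // sa; case: s_eq0; exists a.
Qed.

Fixpoint mps_of d : ((nat -> nat) -> K) -> mps K d :=
  match d with
  | 0 => fun F => F (fun _ => 0%N)
  | d'.+1 => fun F => ((fun n => @mps_of d' (fun b => F (consf n b))) : PS (mps K d'))
  end.

Lemma mcoef_mps_of d F a :
  (forall a b, (forall i, (i < d)%N -> a i = b i) -> F a = F b) ->
  mcoef (mps_of d F) a = F a.
Proof.
elim: d F a => [|d IH] F a HF; first exact: HF.
rewrite mcoefS /= IH; first by apply: HF => -[|i].
by move=> b c bc; apply: HF => -[|i] //= /bc.
Qed.
End Coefficients.

Lemma mps_mul_eq0 (K : idomainType) d (s t : mps K d) : s * t = 0 -> s = 0 \/ t = 0.
Proof.
elim: d s t => [|d IH] s t.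
  by move/eqP; rewrite mulf_eq0 => /orP[] /eqP; [left|right].
move=> st0; apply: NNPP => /Classical_Prop.not_or_and [/ps_neq0 s0 /ps_neq0 t0].
case: (ex_minnP s0) => i si imin; case: (ex_minnP t0) => j tj jmin.
have := congr1 (fun f : PS (mps K d) => f (i + j)%N) st0; rewrite /= psM.
have iij : (i < (i + j).+1)%N by rewrite ltnS leq_addr.
rewrite (bigD1 (Ordinal iij)) //= addKn big1 ?addr0.
  by case/IH => /eqP; rewrite ?(negbTE si) ?(negbTE tj).
move=> [k /= kij] /eqP kneq; case: (ltngtP k i) => [ki|ik|ki].
- suff /eqP -> : (s : PS (mps K d)) k == 0 by rewrite mul0r.
  by apply: contraTT ki => /imin; rewrite -leqNgt.
- suff /eqP -> : (t : PS (mps K d)) (i + j - k)%N == 0 by rewrite mulr0.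
  by apply: contraTT ik => /jmin; rewrite -leqNgt; lia.
- by case: kneq; apply: val_inj.
Qed.

Definition exp_dot d (e a : nat -> nat) := (\sum_(i < d) e i * a i)%N.

Lemma exp_dotS d e a : exp_dot d.+1 e a = (e 0%N * a 0%N + exp_dot d (shift e) (shift a))%N.
Proof. by rewrite /exp_dot big_ord_recl. Qed.

Lemma exp_dot_delta d j a :
  (j < d)%N -> exp_dot d (fun i => (i == j) : nat) a = a j.
Proof.
move=> jd; rewrite /exp_dot (bigD1 (Ordinal jd)) //= eqxx mul1n big1 ?addn0 //.
by move=> i /eqP ij; case: eqP => // ij'; case: ij; apply: val_inj.
Qed.

Fixpoint twist (K : comNzRingType) (z : K) d : K -> (nat -> nat) -> mps K d -> mps K d :=
  match d with
  | 0 => fun c e s => c * s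
  | d'.+1 => fun c e s => ((fun n => @twist K z d' (c * z ^+ (e 0%N * n)) (shift e)
                                         ((s : PS (mps K d')) n)) : PS (mps K d'))
  end.

Section Twist.
Variables (K : comNzRingType) (z : K).

Lemma mcoef_twist d c e (s : mps K d) a :
  mcoef (twist z c e s) a = c * z ^+ exp_dot d e a * mcoef s a.
Proof.
elim: d c e s a => [|d IH] c e s a; first by rewrite /exp_dot big_ord0 expr0 mulr1.
by rewrite mcoefS /= IH exp_dotS exprD mulrA.
Qed.

Lemma twistD d c e (s t : mps K d) : twist z c e (s + t) = twist z c e s + twist z c e t.
Proof. by apply: mcoef_ext => a; rewrite mcoefD !mcoef_twist mcoefD mulrDr. Qed.

Lemma twist0 d c e : twist z c e (0 : mps K d) = 0.
Proof. by apply: mcoef_ext => a; rewrite mcoef0 mcoef_twist mcoef0 mulr0. Qed.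

Lemma twistN d c e (s : mps K d) : twist z c e (- s) = - twist z c e s.
Proof. by apply: mcoef_ext => a; rewrite mcoefN !mcoef_twist mcoefN mulrN. Qed.

Lemma twist_sum d c e I (r : seq I) (F : I -> mps K d) :
  twist z c e (\sum_(i <- r) F i) = \sum_(i <- r) twist z c e (F i).
Proof. exact: (big_morph _ (twistD c e) (twist0 _ c e)). Qed.

Lemma twistM d c c' e (s t : mps K d) :
  twist z (c * c') e (s * t) = twist z c e s * twist z c' e t.
Proof.
elim: d c c' e s t => [|d IH] c c' e s t; first by rewrite /= mulrACA.
apply: ps_ext => n; rewrite psM /= psM twist_sum; apply: eq_bigr => i _.
by rewrite -IH mulrACA -exprD -mulnDr subnKC // -ltnS.
Qed.

Lemma twist1 d e : twist z 1 e (1 : mps K d) = 1.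
Proof.
elim: d e => [|d IH] e; first by rewrite /= mulr1.
apply: ps_ext => n; rewrite /= ps1E; case: eqP => [->|_].
  by rewrite muln0 expr0 mulr1 IH.
by rewrite twist0.
Qed.

End Twist.

Section Conjugation.
Variables (K : comNzRingType) (z : K) (d : nat) (e : nat -> nat).

Definition conj_mps : mps K d -> mps K d := twist z 1 e.

Lemma conj_mps_zmod : zmod_morphism conj_mps.
Proof. by move=> x y; rewrite /conj_mps twistD twistN. Qed.

Lemma conj_mps_monoid : monoid_morphism conj_mps.
Proof. by split=> [|x y]; rewrite /conj_mps ?twist1 // -twistM mulr1. Qed.

HB.instance Definition _ := GRing.isZmodMorphism.Build _ _ conj_mps conj_mps_zmod.
HB.instance Definition _ := GRing.isMonoidMorphism.Build _ _ conj_mps conj_mps_monoid.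
End Conjugation.

Lemma sum_ord_dvdn (R : nmodType) m (F : nat -> R) k : (0 < m)%N ->
  \sum_(i < (k * m).+1) (if (m %| i)%N then F i else 0) = \sum_(j < k.+1) F (j * m)%N.
Proof.
move=> m_gt0; rewrite -(big_mkord xpredT (fun i => if (m %| i)%N then F i else 0)).
rewrite -(big_mkord xpredT (fun j => F (j * m)%N)).
elim: k => [|k IH]; first by rewrite !big_nat1 dvdn0.
rewrite (big_cat_nat _ (n := (k * m).+1)) //=; last by rewrite ltnS leq_pmul2r.
rewrite IH [in RHS]big_nat_recr //=; congr (_ + _).
have km : ((k * m).+1 <= k.+1 * m)%N by rewrite mulSn; lia.
rewrite big_nat_recr //= dvdn_mull // big1_seq ?add0r //.
move=> i /andP [_]; rewrite mem_index_iota => /andP [i_gt i_lt].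
case: ifP => // /dvdnP [q iq]; move: i_gt i_lt; rewrite iq => q_gt q_lt.
have : (k < q)%N by rewrite -(ltn_pmul2r m_gt0).
have : (q < k.+1)%N by rewrite -(ltn_pmul2r m_gt0).
lia.
Qed.

Fixpoint dvdn_all (m d : nat) (a : nat -> nat) : bool :=
  if d is d'.+1 then (m %| a 0%N)%N && dvdn_all m d' (shift a) else true.

Lemma dvdn_allP m d a : reflect (forall i, (i < d)%N -> (m %| a i)%N) (dvdn_all m d a).
Proof.
elim: d a => [|d IH] a /=; first exact: ReflectT.
apply: (iffP andP) => [[a0 /IH aS] [|i] //= id|ad]; first exact: aS.
by split; [apply: ad | apply/IH => i id; apply: ad].
Qed.

Section Ramification.
Variables (K : comNzRingType) (m : nat).
Hypothesis m_gt0 : (0 < m)%N.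
Local Notation ram d := (@mps_ram K m d).

Lemma mcoef_ram d (s : mps K d) a :
  mcoef (ram d s) a = if dvdn_all m d a then mcoef s (fun i => a i %/ m)%N else 0.
Proof.
elim: d s a => [//|d IH] s a; rewrite mcoefS /=.
by case: ifP => _ /=; rewrite ?IH ?mcoef0.
Qed.

Lemma mcoef_ram_mul d (s : mps K d) b :
  mcoef (ram d s) (fun i => m * b i)%N = mcoef s b.
Proof.
rewrite mcoef_ram; case: dvdn_allP => [_|[]]; last by move=> i _; apply: dvdn_mulr.
by apply: eq_mcoef_exp => i _; rewrite mulKn.
Qed.

Lemma mps_ram_inj d : injective (ram d).
Proof. by move=> s t st; apply: mcoef_ext => b; rewrite -!(mcoef_ram_mul _ b) st. Qed.

Lemma mps_ramD d (s t : mps K d) : ram d (s + t) = ram d s + ram d t.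
Proof.
by apply: mcoef_ext => a; rewrite mcoefD !mcoef_ram; case: ifP; rewrite ?mcoefD ?addr0.
Qed.

Lemma mps_ram0 d : ram d 0 = 0.
Proof. by apply: mcoef_ext => a; rewrite !mcoef_ram !mcoef0; case: ifP. Qed.

Lemma mps_ramN d (s : mps K d) : ram d (- s) = - ram d s.
Proof.
by apply: mcoef_ext => a; rewrite mcoefN !mcoef_ram mcoefN; case: ifP; rewrite ?oppr0.
Qed.

Lemma mps_ram_sum d I (r : seq I) (F : I -> mps K d) :
  ram d (\sum_(i <- r) F i) = \sum_(i <- r) ram d (F i).
Proof. exact: (big_morph _ (@mps_ramD d) (mps_ram0 d)). Qed.

Lemma mps_ram1 d : ram d 1 = 1.
Proof.
elim: d => [//|d IH]; apply: ps_ext => -[|n] /=; first by rewrite dvdn0 div0n IH.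
case: ifP => // mn; rewrite ps1E.
have : (0 < n.+1 %/ m)%N by rewrite divn_gt0 // dvdn_leq.
by case: (n.+1 %/ m)%N => // k _; rewrite mps_ram0.
Qed.

Lemma mps_ramM d (s t : mps K d) : ram d (s * t) = ram d s * ram d t.
Proof.
elim: d s t => [//|d IH] s t; apply: ps_ext => n; rewrite psM /=.
case: ifP => [/dvdnP [k ->]|mn].
  rewrite mulnK // psM mps_ram_sum.
  pose G i := ram d ((s : PS _) (i %/ m)%N) * ram d ((t : PS _) ((k * m - i) %/ m)%N).
  rewrite [RHS](eq_bigr (fun i : 'I__ => if (m %| i)%N then G i else 0)); last first.
    move=> [i _] _ /=; case: ifP => mi; last by rewrite mul0r.
    by rewrite dvdn_sub ?dvdn_mull.
  by rewrite sum_ord_dvdn //; apply: eq_bigr => j _; rewrite /G IH mulnK // -mulnBl mulnK.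
rewrite big1 // => -[i i_le] _ /=; case: ifP => mi; last by rewrite mul0r.
case: ifP => mni; last by rewrite mulr0.
by exfalso; move: mn; rewrite -(subnKC (n := n) (m := i)) ?dvdn_add.
Qed.
End Ramification.

Definition ramS (K : comNzRingType) n d : mps K d -> mps K d := @mps_ram K n.+1 d.

Section RamMorphism.
Variables (K : comNzRingType) (n d : nat).

Lemma ramS_zmod : zmod_morphism (@ramS K n d).
Proof. by move=> x y; rewrite /ramS mps_ramD // mps_ramN. Qed.

Lemma ramS_monoid : monoid_morphism (@ramS K n d).
Proof. by split=> [|x y]; rewrite /ramS ?mps_ram1 ?mps_ramM. Qed.

Lemma ramS_inj : injective (@ramS K n d).
Proof. exact: mps_ram_inj. Qed.

HB.instance Definition _ := GRing.isZmodMorphism.Build _ _ (@ramS K n d) ramS_zmod.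
HB.instance Definition _ := GRing.isMonoidMorphism.Build _ _ (@ramS K n d) ramS_monoid.
End RamMorphism.

Section Descent.
Variables (K : idomainType) (m : nat) (z : K).
Hypothesis z_prim : m.-primitive_root z.

Lemma twist_ram d e (s : mps K d) : twist z 1 e (@mps_ram K m d s) = @mps_ram K m d s.
Proof.
apply: mcoef_ext => a; rewrite mcoef_twist mul1r mcoef_ram.
case: dvdn_allP => [ma|_]; last by rewrite mulr0.
suff /eqP -> : z ^+ exp_dot d e a == 1 by rewrite mul1r.
by rewrite -(prim_order_dvd z_prim) dvdn_sum // => i _; apply/dvdn_mull/ma.
Qed.

Definition mps_unram d (s : mps K d) : mps K d :=
  mps_of d (fun b => mcoef s (fun i => m * b i)%N).

Lemma mps_unram0 d : mps_unram (0 : mps K d) = 0.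
Proof.
by apply: mcoef_ext => a; rewrite mcoef0 mcoef_mps_of ?mcoef0 // => b c _; rewrite !mcoef0.
Qed.

(* A series fixed by all twists only has exponents divisible by m: the twist
   along the i-th coordinate scales the coefficient of T^a by z^(a i). *)
Lemma mps_unramK d (s : mps K d) :
  (forall e, twist z 1 e s = s) -> @mps_ram K m d (mps_unram s) = s.
Proof.
move=> s_fix; apply: mcoef_ext => a; rewrite mcoef_ram.
case: dvdn_allP => [ma|not_ma].
  rewrite mcoef_mps_of; last by move=> b c bc; apply: eq_mcoef_exp => i /bc ->.
  by apply: eq_mcoef_exp => i /ma mai; rewrite mulnC divnK.
have [j [jd maj]] : exists j, (j < d)%N /\ ~~ (m %| a j)%N.
  apply: NNPP => all_ma; apply: not_ma => i id; apply: negbNE; apply/negP => mai.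
  by apply: all_ma; exists i.
have := congr1 (fun t : mps K d => mcoef t a) (s_fix (fun i => (i == j) : nat)).
rewrite /= mcoef_twist mul1r exp_dot_delta // => /eqP.
rewrite -subr_eq0 -{2}[mcoef s a]mul1r -mulrBl mulf_eq0 subr_eq0.
by rewrite -(prim_order_dvd z_prim) (negbTE maj) => /eqP.
Qed.
End Descent.

Section SplitPolynomials.
Variables (K : idomainType) (d : nat).
Local Notation M := (mps K d).

Lemma prod_subr_eq0_mem (s : seq M) (a : M) : \prod_(b <- s) (a - b) = 0 -> a \in s.
Proof.
elim: s => [|b s IH]; first by rewrite big_nil => /eqP; rewrite oner_eq0.
by rewrite big_cons inE => /mps_mul_eq0 [/eqP|/IH ->]; rewrite ?orbT // subr_eq0 => ->.
Qed.

Lemma perm_eq_prod_XsubC (s t : seq M) :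
  \prod_(a <- s) ('X - a%:P) = \prod_(a <- t) ('X - a%:P) -> perm_eq s t.
Proof.
elim: s t => [|a s IH] t.
  rewrite big_nil => /(congr1 (fun p : {poly M} => size p)) /=.
  by rewrite size_poly1 size_prod_XsubC; case: t.
rewrite big_cons => st.
have at_ : a \in t.
  apply: prod_subr_eq0_mem; have := congr1 (fun p : {poly M} => p.[a]) st.
  rewrite /= hornerM hornerXsubC subrr mul0r horner_prod => ->.
  by apply: eq_bigr => b _; rewrite hornerXsubC.
rewrite (perm_big _ (perm_to_rem at_)) big_cons in st.
move/(monic_lreg (monicXsubC a))/IH: st; rewrite -(perm_cons a) => /perm_trans; apply.
by rewrite perm_sym perm_to_rem.
Qed.
End SplitPolynomials.

Lemma prod_XsubC_mul_eq1 (R : nzRingType) (s : seq R) (u : {poly R}) :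
  \prod_(a <- s) ('X - a%:P) * u = 1 -> s = [::].
Proof.
move=> su1; have u0 : u != 0.
  by apply: contra_eq_neq su1 => ->; rewrite mulr0 eq_sym oner_neq0.
move: su1 => /(congr1 (fun p : {poly R} => size p)) /=.
rewrite size_monicM ?monic_prod_XsubC //.
rewrite size_prod_XsubC size_poly1 -size_poly_gt0 in u0 *.
by case: s => // a s; case: (size u) u0 => // k _; rewrite addSn addnS.
Qed.

Section GaloisRoots.
Variables (K : idomainType) (n d : nat) (z : K).
Hypothesis z_prim : n.+1.-primitive_root z.
Local Notation M := (mps K d).
Local Notation ram := (@ramS K n d).
Local Notation conj e := (@conj_mps K z d e).

Lemma map_conj_ram (F : {poly M}) e :
  map_poly (conj e) (map_poly ram F) = map_poly ram F.
Proof. by apply/polyP => i; rewrite !coef_map /= /conj_mps /ramS twist_ram. Qed.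

Lemma perm_conj_roots (F : {poly M}) rF e :
  splits_with n.+1 F rF -> perm_eq (map (conj e) rF) rF.
Proof.
move=> Fs; apply: perm_eq_prod_XsubC.
by rewrite big_map -(map_prod_XsubC (conj e)) -Fs map_conj_ram.
Qed.

Lemma map_unramK (P : {poly M}) : (forall e, map_poly (conj e) P = P) ->
  map_poly ram (map_poly (@mps_unram K n.+1 d) P) = P.
Proof.
move=> P_fix; apply/polyP => i; rewrite coef_map /= coef_map_id0 ?mps_unram0 //.
rewrite /ramS (mps_unramK z_prim) // => e.
by have := congr1 (coefp i) (P_fix e); rewrite /= coef_map.
Qed.

Lemma conj_stable_factor (F : {poly M}) rF (q : pred M) :
  splits_with n.+1 F rF ->
  (forall e a, q (conj e a) = q a) ->
  exists P : {poly M}, map_poly ram P = \prod_(a <- rF | q a) ('X - a%:P).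
Proof.
move=> Fs q_conj.
exists (map_poly (@mps_unram K n.+1 d) (\prod_(a <- rF | q a) ('X - a%:P))).
apply: map_unramK => e; rewrite map_prod_XsubC.
rewrite [RHS](perm_big (map (conj e) rF)) 1?perm_sym ?(perm_conj_roots e Fs) //.
by rewrite big_map; apply: eq_bigl => a; rewrite q_conj.
Qed.

Lemma poly_unit_split_nil (P : {poly M}) s :
  Defs.poly_unit P -> map_poly ram P = \prod_(a <- s) ('X - a%:P) -> s = [::].
Proof.
move=> [u Pu] Ps; apply: (@prod_XsubC_mul_eq1 _ _ (map_poly ram u)).
by rewrite -Ps -rmorphM Pu rmorph1.
Qed.

Lemma irreducible_root_exists (F : {poly M}) rF :
  poly_irreducible F -> splits_with n.+1 F rF ->
  exists x, x \in rF.
Proof.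
case: rF => [|x rF] [F_nunit _] Fs; last by exists x; rewrite mem_head.
case: F_nunit; exists 1; rewrite mulr1.
apply: (map_inj_poly (@ramS_inj K n d) (raddf0 _)).
by rewrite Fs big_nil rmorph1.
Qed.

Lemma conj_invariant_const (T : eqType) (F : {poly M}) rF (phi : M -> T) :
  poly_irreducible F -> splits_with n.+1 F rF ->
  (forall e x, phi (conj e x) = phi x) -> {in rF &, forall x y, phi x = phi y}.
Proof.
move=> [_ F_irr] Fs phi_conj x y xF yF; pose q a := phi a == phi x.
have q_conj e a : q (conj e a) = q a by rewrite /q phi_conj.
have [P Ps] := conj_stable_factor Fs q_conj.
have [Q Qs] := conj_stable_factor Fs (q := predC q) (fun e a => congr1 negb (q_conj e a)).
have FPQ : F = P * Q.
  apply: (map_inj_poly (@ramS_inj K n d) (raddf0 _)).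
  by rewrite rmorphM /= Ps Qs Fs (bigID q).
case: (F_irr _ _ FPQ) => [Pu|Qu].
  move: Ps; rewrite -big_filter => /(poly_unit_split_nil Pu) nil_q.
  by have := mem_filter q x rF; rewrite nil_q in_nil /q eqxx xF.
move: Qs; rewrite -big_filter => /(poly_unit_split_nil Qu) nil_nq.
have := mem_filter (predC q) y rF; rewrite nil_nq in_nil yF andbT /= /q.
by move=> /esym/negbFE/eqP ->.
Qed.
End GaloisRoots.

Section WeightedOrder.
Variables (K : comNzRingType) (R : realFieldType).

Lemma wpairS d (w : 'I_d.+1 -> R) a :
  wpair w a = w ord0 * (a 0%N)%:R + wpair (fun i => w (lift ord0 i)) (shift a).
Proof. by rewrite /wpair big_ord_recl. Qed.

(* Induction on d: optimize the tail exponents first; an element whose first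
   exponent exceeds that of the optimal tail cannot do better, and the finitely
   many smaller first exponents are handled one at a time. *)
Lemma wpair_argmin d (w : 'I_d -> R) (P : (nat -> nat) -> Prop) :
  (forall i, 0 <= w i) -> (exists a, P a) ->
  exists2 c, P c & forall a, P a -> wpair w c <= wpair w a.
Proof.
elim: d w P => [|d IH] w P w_ge0 [a0 Pa0].
  by exists a0 => // a _; rewrite /wpair !big_ord0.
pose w' i := w (lift ord0 i).
have w'_ge0 i : 0 <= w' i by apply: w_ge0.
have [b [h Phb] bmin] : exists2 b, exists h, P (consf h b) &
    forall b', (exists h, P (consf h b')) -> wpair w' b <= wpair w' b'.
  by apply: IH => //; exists (shift a0), (a0 0%N); rewrite consf_shift.
have tail a : P a -> (h <= a 0%N)%N -> wpair w (consf h b) <= wpair w a.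
  move=> Pa ha; rewrite !wpairS lerD ?ler_wpM2l ?ler_nat //.
  by apply: bmin; exists (a 0%N); rewrite consf_shift.
have low N : exists2 c, P c & forall a, P a ->
    (a 0%N < N)%N || (h <= a 0%N)%N -> wpair w c <= wpair w a.
  elim: N => [|N [c Pc cmin]]; first by exists (consf h b) => // a Pa /(tail a Pa).
  have split_N a : (a 0%N < N.+1)%N || (h <= a 0%N)%N ->
      a 0%N = N \/ (a 0%N < N)%N || (h <= a 0%N)%N.
    by rewrite ltnS leq_eqVlt -orbA => /orP [/eqP|]; [left|right].
  case: (classic (exists b', P (consf N b'))) => [exN|noN]; last first.
    exists c => // a Pa /split_N [aN|]; last exact: cmin.
    by case: noN; exists (shift a); rewrite -aN consf_shift.
  have [bN PbN bNmin] := IH w' (fun b' => P (consf N b')) w'_ge0 exN.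
  have atN a : P a -> a 0%N = N -> wpair w (consf N bN) <= wpair w a.
    move=> Pa aN; rewrite !wpairS /= aN lerD2l.
    by apply: bNmin; rewrite /= -aN consf_shift.
  case: (lerP (wpair w c) (wpair w (consf N bN))) => [cN|Nc].
    exists c => // a Pa /split_N [aN|]; last exact: cmin.
    exact: le_trans cN (atN a Pa aN).
  exists (consf N bN) => // a Pa /split_N [aN|aN]; first exact: atN.
  exact: le_trans (ltW Nc) (cmin a Pa aN).
have [c Pc cmin] := low h.
by exists c => // a Pa; apply: (cmin a Pa); case: ltnP.
Qed.

Variables (d : nat) (w : 'I_d -> R).
Local Notation ord := (@ordT K R d w).

Lemma is_ord_min_uniq (s : mps K d) r r' :
  is_ord_min w s r -> is_ord_min w s r' -> r = r'.
Proof.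
move=> [[a [sa <-]] amin] [[b [sb <-]] bmin].
by apply/eqP; rewrite eq_le amin // bmin.
Qed.

Lemma ordT_Some (s : mps K d) r : is_ord_min w s r -> ord s = Some r.
Proof.
move=> sr; rewrite /ordT; case: excluded_middle_informative => [ex|[]]; last by exists r.
congr Some; apply: is_ord_min_uniq sr.
exact: proj2_sig (constructive_indefinite_description _ ex).
Qed.

Lemma ordT_spec (s : mps K d) r : ord s = Some r -> is_ord_min w s r.
Proof.
rewrite /ordT; case: excluded_middle_informative => // ex [<-].
exact: proj2_sig (constructive_indefinite_description _ ex).
Qed.

Lemma ordT0 : ord 0 = None.
Proof.
rewrite /ordT; case: excluded_middle_informative => // ex; exfalso.
by case: ex => r [[a []]]; rewrite mcoef0 eqxx.
Qed.

Lemma ordT_eq_support (s t : mps K d) :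
  (forall a, (mcoef s a != 0) = (mcoef t a != 0)) -> ord s = ord t.
Proof.
move=> st.
have min_st (u v : mps K d) : (forall a, (mcoef u a != 0) = (mcoef v a != 0)) ->
    forall r, is_ord_min w u r -> is_ord_min w v r.
  move=> uv r [[a [ua ar]] amin]; split=> [|b]; first by exists a; rewrite -uv.
  by rewrite -uv; apply: amin.
case Es: (ord s) => [r|]; first by rewrite (ordT_Some (min_st _ _ st _ (ordT_spec Es))).
case Et: (ord t) => [r|] //.
by rewrite (ordT_Some (min_st _ _ (fun a => esym (st a)) _ (ordT_spec Et))) in Es.
Qed.

Hypothesis w_ge0 : forall i, 0 <= w i.

Lemma ordT_neq0 (s : mps K d) : s <> 0 -> exists2 r, ord s = Some r & is_ord_min w s r.
Proof.
move=> /mcoef_neq0 supp_s.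
have [c sc cmin] := @wpair_argmin d w (fun a => mcoef s a != 0) w_ge0 supp_s.
have s_min : is_ord_min w s (wpair w c) by split=> //; exists c.
by exists (wpair w c); first exact: ordT_Some.
Qed.

Lemma ordT_add (x y : mps K d) : ele (emin (ord x) (ord y)) (ord (x + y)).
Proof.
have [->|/ordT_neq0 [r -> [[a [xya <-]] _]]] := classic (x + y = 0).
  by rewrite ordT0; case: emin.
have [xa|ya] : mcoef x a != 0 \/ mcoef y a != 0.
- case: (eqVneq (mcoef x a) 0) => [xa0|]; last by left.
  by right; move: xya; rewrite mcoefD xa0 add0r.
- have /ordT_neq0 [rx -> [_ xmin]] : x <> 0 by move=> x0; move: xa; rewrite x0 mcoef0 eqxx.
  by case: (ord y) => [ry|] /=; rewrite ?ge_min xmin.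
- have /ordT_neq0 [ry -> [_ ymin]] : y <> 0 by move=> y0; move: ya; rewrite y0 mcoef0 eqxx.
  by case: (ord x) => [rx|] /=; rewrite ?ge_min ymin ?orbT.
Qed.
End WeightedOrder.

Section ExtendedOrder.
Variable R : realFieldType.
Implicit Types u v t : option R.

Definition osum (l : seq (option R)) := foldr (@eadd R) (Some 0) l.

Lemma osumE l : osum l = if all isSome l then Some (\sum_(x <- l) odflt 0 x) else None.
Proof. by elim: l => [|[a|] l IH] //=; rewrite ?big_nil // IH big_cons; case: all. Qed.

Lemma osum_perm l1 l2 : perm_eq l1 l2 -> osum l1 = osum l2.
Proof. by move=> l12; rewrite !osumE (perm_all _ l12) (perm_big _ l12). Qed.

Lemma osum_cat l1 l2 : osum (l1 ++ l2) = eadd (osum l1) (osum l2).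
Proof. by rewrite !osumE all_cat big_cat; case: (all isSome l1); case: (all isSome l2). Qed.

Lemma ele_refl u : ele u u.
Proof. by case: u => //= a; rewrite lexx. Qed.

Lemma ele_trans v u t : ele u v -> ele v t -> ele u t.
Proof. by case: u; case: v; case: t => //= a b c; apply: le_trans. Qed.

Lemma ele_total u v : ele u v || ele v u.
Proof. by case: u; case: v => //= a b; apply: le_total. Qed.

Lemma ele_eadd u v u' v' : ele u u' -> ele v v' -> ele (eadd u v) (eadd u' v').
Proof. by case: u; case: v; case: u'; case: v' => //= a b c e; apply: lerD. Qed.

Lemma ele_osum (I : eqType) (s : seq I) (F G : I -> option R) :
  (forall x, x \in s -> ele (F x) (G x)) -> ele (osum (map F s)) (osum (map G s)).
Proof.
elim: s => [|x s IH] FG /=; first by rewrite lexx.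
by rewrite ele_eadd ?FG ?mem_head // IH // => y ys; rewrite FG // inE ys orbT.
Qed.

Lemma ele_eminl u v t : ele u t -> ele (emin u v) t.
Proof. by case: u; case: v; case: t => //= a b c ac; rewrite ge_min ac. Qed.

Lemma ele_eminr u v t : ele v t -> ele (emin u v) t.
Proof. by case: u; case: v; case: t => //= a b c bc; rewrite ge_min bc orbT. Qed.

Lemma ele_emin u v t : ele u v -> ele u t -> ele u (emin v t).
Proof. by case: u; case: v; case: t => //= a b c; rewrite le_min => -> ->. Qed.

Lemma ele_escale c u v : 0 <= c -> ele u v -> ele (escale c u) (escale c v).
Proof. by case: u; case: v => //= a b c0; apply: ler_wpM2l. Qed.

Lemma ele_argmax (T : eqType) (s : seq T) (G : T -> option R) x0 :
  x0 \in s -> exists2 x, x \in s & forall y, y \in s -> ele (G y) (G x).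
Proof.
elim: s x0 => [//|a s IH] _ _; case: s IH => [|b s] IH.
  by exists a => [|y]; rewrite ?mem_head // inE => /eqP ->; apply: ele_refl.
have [c cs cmax] := IH b (mem_head b s); case/orP: (ele_total (G a) (G c)) => [ac|ca].
  by exists c => [|y]; rewrite in_cons ?cs ?orbT // => /orP [/eqP ->|/cmax].
exists a => [|y]; rewrite ?mem_head // in_cons => /orP [/eqP ->|/cmax yc].
  exact: ele_refl.
exact: ele_trans yc ca.
Qed.

Fixpoint emul (n : nat) u := if n is n'.+1 then eadd u (emul n' u) else Some 0.

Lemma escale_emul k n u : (0 < n)%N ->
  escale ((k * n)%:R^-1) (emul n u) = escale (k%:R^-1) u.
Proof.
case: n => // n _; have -> : emul n.+1 u = if u is Some a then Some (a *+ n.+1) else None.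
  elim: n => [|n IH]; first by case: u => //= a; rewrite addr0.
  by rewrite -[emul n.+2 u]/(eadd u (emul n.+1 u)) IH; case: u {IH} => //= a; rewrite mulrS.
case: u => //= a; congr Some.
by rewrite -[a *+ _]mulr_natr natrM invfM -mulrA [_^-1 * (a * _)]mulrC mulfK // pnatr_eq0.
Qed.
End ExtendedOrder.

Section Contact.
Variables (K : comNzRingType) (R : realFieldType) (d : nat) (w : 'I_d -> R).
Local Notation ord := (@ordT K R d w).

Definition row_ord (rg : seq (mps K d)) x := osum [seq ord (x - y) | y <- rg].
Definition col_ord (rf : seq (mps K d)) y := osum [seq ord (x - y) | x <- rf].

Lemma cont_row m rf rg x0 : x0 \in rf ->
  {in rf &, forall x x', row_ord rg x = row_ord rg x'} ->
  cont w m rf rg = escale ((m * size rg)%:R^-1) (row_ord rg x0).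
Proof.
move=> x0f rf_const; rewrite /cont -/(osum _).
have -> : osum [seq ord (x - y) | x <- rf, y <- rg] = emul (size rf) (row_ord rg x0).
  have : {in rf, forall x, row_ord rg x = row_ord rg x0} by move=> x xf; apply: rf_const.
  elim: rf {x0f rf_const} => [//|x rf IH] rf_row.
  rewrite allpairs_cons osum_cat -/(row_ord rg x) rf_row ?mem_head //.
  by rewrite IH // => x' x'f; apply: rf_row; rewrite inE x'f orbT.
by rewrite mulnAC escale_emul //; case: rf x0f {rf_const}.
Qed.

Lemma cont_col m rf rg y0 : y0 \in rg ->
  {in rg &, forall y y', col_ord rf y = col_ord rf y'} ->
  cont w m rf rg = escale ((m * size rf)%:R^-1) (col_ord rf y0).
Proof.
move=> y0g rg_const; rewrite /cont -/(osum _).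
have -> : osum [seq ord (x - y) | x <- rf, y <- rg] = emul (size rg) (col_ord rf y0).
  have : {in rg, forall y, col_ord rf y = col_ord rf y0} by move=> y yg; apply: rg_const.
  elim: rg {y0g rg_const} => [|y rg IH] rg_col; first by clear rg_col; elim: rf.
  rewrite (osum_perm (permEl (perm_allpairs_consr _ _ _ _))) osum_cat.
  rewrite -/(col_ord rf y) rg_col ?mem_head //.
  by rewrite IH // => y' y'g; apply: rg_col; rewrite inE y'g orbT.
by rewrite escale_emul //; case: rg y0g {rg_const}.
Qed.

Hypothesis w_ge0 : forall i, 0 <= w i.

Lemma ordT_add_ge u (x y : mps K d) : ele u (ord x) -> ele u (ord y) -> ele u (ord (x + y)).
Proof. by move=> ux uy; apply: ele_trans (ordT_add w_ge0 x y); apply: ele_emin. Qed.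

Lemma cont_triangle m rf rg rh a1 b1 c1 :
  a1 \in rf -> b1 \in rg -> c1 \in rh ->
  {in rf &, forall x x', row_ord rg x = row_ord rg x'} ->
  {in rh &, forall x x', row_ord rg x = row_ord rg x'} ->
  {in rg &, forall y y', col_ord rf y = col_ord rf y'} ->
  {in rh &, forall y y', col_ord rf y = col_ord rf y'} ->
  ele (emin (cont w m rf rh) (cont w m rh rg)) (cont w m rf rg).
Proof.
move=> a1f b1g c1h fg_row hg_row fg_col fh_col.
have [[? ?] /allpairsP [[a c] [/= af ch [-> ->]]] fh_max] :=
  ele_argmax (fun p => ord (p.1 - p.2)) (allpairs_f pair a1f c1h).
have [[? ?] /allpairsP [[c' b] [/= c'h bg [-> ->]]] hg_max] :=
  ele_argmax (fun p => ord (p.1 - p.2)) (allpairs_f pair c1h b1g).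
have scale_ge0 k : 0 <= (k%:R : R)^-1 by rewrite invr_ge0 ler0n.
case/orP: (ele_total (ord (c' - b)) (ord (a - c))) => [hg_le|fh_le].
  rewrite (cont_row m af fg_row) (cont_row m ch hg_row).
  apply/ele_eminr/ele_escale/ele_osum => // y yg.
  have -> : a - y = (a - c) + (c - y) by rewrite addrA subrK.
  apply: ordT_add_ge (ele_refl _).
  exact: ele_trans (hg_max (c, y) (allpairs_f pair ch yg)) hg_le.
rewrite (cont_col m bg fg_col) (cont_col m c'h fh_col).
apply/ele_eminl/ele_escale/ele_osum => // x xf.
have -> : x - b = (x - c') + (c' - b) by rewrite addrA subrK.
apply: ordT_add_ge (ele_refl _) _.
exact: ele_trans (fh_max (x, c') (allpairs_f pair xf c'h)) fh_le.
Qed.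
End Contact.

Section ConjugateRoots.
Variables (K : idomainType) (R : realFieldType) (n d : nat) (w : 'I_d -> R) (z : K).
Hypothesis z_prim : n.+1.-primitive_root z.
Local Notation M := (mps K d).
Local Notation conj e := (@conj_mps K z d e).
Local Notation ram := (@ramS K n d).

Lemma ordT_conj e (s : M) : ordT w (conj e s) = ordT w s.
Proof.
have z0 : z != 0 by rewrite (prim_root_eq0 z_prim).
apply: ordT_eq_support => a.
by rewrite /conj_mps mcoef_twist mul1r mulf_eq0 negb_or expf_neq0.
Qed.

Lemma row_ord_conj (G : {poly M}) rg e x :
  splits_with n.+1 G rg -> row_ord w rg (conj e x) = row_ord w rg x.
Proof.
move=> Gs; rewrite /row_ord -(osum_perm (perm_map _ (perm_conj_roots z_prim e Gs))).
by rewrite -map_comp; congr osum; apply: eq_map => y /=; rewrite -rmorphB ordT_conj.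
Qed.

Lemma col_ord_conj (F : {poly M}) rf e y :
  splits_with n.+1 F rf -> col_ord w rf (conj e y) = col_ord w rf y.
Proof.
move=> Fs; rewrite /col_ord -(osum_perm (perm_map _ (perm_conj_roots z_prim e Fs))).
by rewrite -map_comp; congr osum; apply: eq_map => x /=; rewrite -rmorphB ordT_conj.
Qed.
End ConjugateRoots.

Lemma prim_root_exists (K : closedFieldType) n :
  [pchar K] =i pred0 -> (0 < n)%N -> exists z : K, n.-primitive_root z.
Proof.
move=> K_char0 n_gt0; have [r Dp] := closed_field_poly_normal ('X^n - 1 : {poly K}).
rewrite (monicP (monicXnsubC _ n_gt0)) scale1r in Dp.
have rn1 : all n.-unity_root r by apply/allP => z; rewrite -root_prod_XsubC -Dp.
have sz_r : (n < (size r).+1)%N by rewrite -(size_prod_XsubC r id) -Dp size_XnsubC.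
have [|z] := hasP (cyclic.has_prim_root n_gt0 rn1 _ sz_r); last by exists z.
rewrite -separable_prod_XsubC -Dp separable_Xn_sub_1 //.
by rewrite ((pcharf0P K).1 K_char0 n) -lt0n.
Qed.

Theorem mainTheorem8 (K : closedFieldType) (K_char0 : [pchar K] =i pred0)
    (d : nat) (f g h : {poly mps K d})
    (f_irr : poly_irreducible f) (g_irr : poly_irreducible g) (h_irr : poly_irreducible h)
    (f_qo : quasi_ordinary f) (g_qo : quasi_ordinary g) (h_qo : quasi_ordinary h)
    (R : realFieldType) (w : 'I_d -> R) (w_ge0 : forall i, 0 <= w i)
    (m : nat) (m_gt0 : (0 < m)%N) (rf rg rh : seq (mps K d))
    (f_split : splits_with m f rf) (g_split : splits_with m g rg)
    (h_split : splits_with m h rh) :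
  ele (emin (cont w m rf rh) (cont w m rh rg)) (cont w m rf rg).
Proof.
have [z z_prim] := prim_root_exists K_char0 m_gt0.
case: m m_gt0 z_prim f_split g_split h_split => // n _ z_prim fs gs hs.
have [a af] := irreducible_root_exists f_irr fs.
have [b bg] := irreducible_root_exists g_irr gs.
have [c ch] := irreducible_root_exists h_irr hs.
apply: (cont_triangle w_ge0 n.+1 af bg ch).
- exact (conj_invariant_const z_prim f_irr fs (fun e x => row_ord_conj w z_prim e x gs)).
- exact (conj_invariant_const z_prim h_irr hs (fun e x => row_ord_conj w z_prim e x gs)).
- exact (conj_invariant_const z_prim g_irr gs (fun e y => col_ord_conj w z_prim e y fs)).
- exact (conj_invariant_const z_prim h_irr hs (fun e y => col_ord_conj w z_prim e y fs)).
Qed.
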